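(* Let $0<\delta\le\frac12$ be fixed. There exist constants $C_\delta>0$ and $N_\delta$ depending only on $\delta$ such that for all integers $n\ge N_\delta$ and all integers $d>1$, $$\Big|\frac1d\sum_{1\le h\le d-1}\Big(1-\delta+\delta\cos\big(\tfrac{2\pi h}{d}\big)\Big)^{n/2}\Big|\le C_\delta\,\frac{\log n}{\sqrt n}.$$ *)

From HB Require Import structures.
From mathcomp Require Import all_boot all_order all_algebra.
From mathcomp Require Import all_classical all_reals all_analysis.

From HB Require Import structures.
From mathcomp Require Import all_boot all_order all_algebra.
From mathcomp Require Import all_classical all_reals all_analysis.
From mathcomp Require Import ring lra zify.
Import Order.TTheory GRing.Theory Num.Theory.
Import numFieldNormedType.Exports.
Local Open Scope classical_set_scope.
Local Open Scope ring_scope.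

(* For 0 <= b <= 1 we have b ^ k <= exp (- k (1 - b)) <= 1 / (1 + k (1 - b)),
   and 1 - cos (2 pi t) >= t ^ 2 on [0, 1/2]; with delta <= 1/2 this bounds the
   h-th term, for 2 h <= d, by 1 / (1 + (s h) ^ 2) where s = delta sqrt n / d,
   and the terms with 2 h > d are handled by h |-> d - h.  Like the integral of
   1 / (1 + (s x) ^ 2), the sum of these is at most 2 / s, so the average is at
   most 4 / (delta sqrt n), which beats the claimed bound by a factor log n. *)

Section Bounds.
Variable R : realType.
Implicit Types x t s delta : R.

Lemma ge0_of_derive_ge0 (f df : R -> R) :
  (forall x, is_derive x 1 f (df x)) -> f 0 = 0 ->
  (forall x, 0 <= x -> 0 <= df x) -> forall x, 0 <= x -> 0 <= f x.
Proof.
move=> fd f0 df_ge0 b b0.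
have fc : {within `[0, b], continuous f}.
  apply: continuous_subspaceT => y; apply: differentiable_continuous.
  by apply/derivable1_diffP; case: (fd y).
have [c /itvP cin Ec] := MVT_segment b0 (fun y _ => fd y) fc.
move: Ec; rewrite f0 !subr0 => ->.
by rewrite mulr_ge0 // df_ge0 // cin.
Qed.

Lemma sin_le_id x : 0 <= x -> sin x <= x.
Proof.
move=> x0; rewrite -subr_ge0; move: x x0.
apply: (@ge0_of_derive_ge0 (fun x => x - sin x) (fun x => 1 - cos x)).
- by rewrite sin0 subr0.
- by move=> y _; rewrite subr_ge0 cos_le1.
Qed.

Lemma cos_ge_taylor2 x : 0 <= x -> 1 - x ^+ 2 / 2 <= cos x.
Proof.
move=> x0; rewrite -subr_ge0; move: x x0.
apply: (@ge0_of_derive_ge0 (fun x => cos x - (1 - x ^+ 2 / 2)) (fun x => x - sin x)).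
- move=> y; apply: is_derive_eq.
  by rewrite !scaler0 /GRing.scale /= !mulr1; lra.
- by rewrite cos0 expr0n /=; lra.
- by move=> y y0; rewrite subr_ge0 sin_le_id.
Qed.

Lemma sin_ge_taylor3 x : 0 <= x -> x - x ^+ 3 / 6 <= sin x.
Proof.
move=> x0; rewrite -subr_ge0; move: x x0.
apply: (@ge0_of_derive_ge0 (fun x => sin x - (x - x ^+ 3 / 6))
                           (fun x => cos x - (1 - x ^+ 2 / 2))).
- move=> y; apply: is_derive_eq.
  by rewrite !scaler0 /GRing.scale /= !mulr1; field.
- by rewrite sin0 expr0n /=; lra.
- by move=> y y0; rewrite subr_ge0 cos_ge_taylor2.
Qed.

Lemma cos_le_taylor4 x : 0 <= x -> cos x <= 1 - x ^+ 2 / 2 + x ^+ 4 / 24.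
Proof.
move=> x0; rewrite -subr_ge0; move: x x0.
apply: (@ge0_of_derive_ge0 (fun x => 1 - x ^+ 2 / 2 + x ^+ 4 / 24 - cos x)
                           (fun x => sin x - (x - x ^+ 3 / 6))).
- move=> y; apply: is_derive_eq.
  by rewrite !scaler0 /GRing.scale /= !mulr1; field.
- by rewrite cos0 expr0n /=; lra.
- by move=> y y0; rewrite subr_ge0 sin_ge_taylor3.
Qed.

Lemma sqr_div12_le_1Bcos x : 0 <= x <= pi -> x ^+ 2 / 12 <= 1 - cos x.
Proof.
move=> /andP[x0 xpi].
have pi_lt4 : pi < 4 :> R by have := @pihalf_lt2 R; lra.
have x2_ge0 : 0 <= x ^+ 2 by rewrite sqr_ge0.
have [x_le2|x_gt2] := leP x 2.
  have x2_le4 : x ^+ 2 <= 4 by rewrite (_ : 4 = 2 ^+ 2) ?ler_sqr ?nnegrE //; lra.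
  have := cos_le_taylor4 x x0; rewrite (exprM x 2 2).
  move: (x ^+ 2) x2_le4 x2_ge0 => y; nra.
have pi_ge2 := @pi_ge2 R.
have cos_le_cos2 : cos x <= cos 2.
  by apply/ltW; rewrite ltr_cos // !in_itv /= ?x0 ?xpi //; apply/andP; lra.
have x2_le16 : x ^+ 2 <= 16 by rewrite (_ : 16 = 4 ^+ 2) ?ler_sqr ?nnegrE //; lra.
have := cos_le_taylor4 2 (ler0n R 2); lra.
Qed.

Lemma sqr_le_1Bcos2pi t : 0 <= t <= 2^-1 -> t ^+ 2 <= 1 - cos (2 * pi * t).
Proof.
move=> /andP[t0 t_le].
have pi_ge2 := @pi_ge2 R.
have x_itv : 0 <= 2 * pi * t <= pi by apply/andP; split; [rewrite !mulr_ge0 //; lra | nra].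
apply: le_trans (sqr_div12_le_1Bcos _ x_itv).
rewrite !exprMn; have := sqr_ge0 t.
have : 4 <= pi ^+ 2 :> R by rewrite expr2; nra.
nra.
Qed.

Lemma powR_le_inv1DM (b k : R) : 0 <= b <= 1 -> 0 <= k ->
  b `^ k <= (1 + k * (1 - b))^-1.
Proof.
move=> /andP[b0 b1] k0.
have [->|b_neq0] := eqVneq b 0.
  have [->|k_neq0] := eqVneq k 0; first by rewrite powRr0 mul0r addr0 invr1.
  by rewrite powR0 // invr_ge0 subr0 mulr1; lra.
have b_gt0 : 0 < b by rewrite lt_neqAle eq_sym b_neq0.
rewrite /powR (negbTE b_neq0).
apply: (@le_trans _ _ (expR (- (k * (1 - b))))).
  rewrite ler_expR -mulrN opprB ler_wpM2l //.
  by have := @le_ln1Dx R (b - 1); rewrite addrCA subrr addr0; apply; lra.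
rewrite expRN lef_pV2 ?posrE ?expR_gt0 ?expR_ge1Dx //.
by rewrite ltr_wpDr ?mulr_ge0 ?subr_ge0.
Qed.

Lemma powR_cos2pi_le delta x t : 0 <= delta <= 2^-1 -> 0 <= x -> 0 <= t <= 2^-1 ->
  (1 - delta + delta * cos (2 * pi * t)) `^ (x / 2)
    <= (1 + (delta * Num.sqrt x * t) ^+ 2)^-1.
Proof.
move=> /andP[dl0 dl1] x0 t_itv.
have t2_le := sqr_le_1Bcos2pi _ t_itv.
have c_le1 := cos_le1 (2 * pi * t); have c_geN1 := cos_geN1 (2 * pi * t).
move: (cos _) t2_le c_le1 c_geN1 => c t2_le c_le1 c_geN1.
have k0 : 0 <= x / 2 by rewrite divr_ge0.
have b_itv : 0 <= 1 - delta + delta * c <= 1 by apply/andP; split; nra.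
apply: le_trans (powR_le_inv1DM _ _ b_itv k0) _.
have t2_ge0 : 0 <= t ^+ 2 by rewrite sqr_ge0.
rewrite lef_pV2 ?posrE; last 2 first.
- have c1 : 0 <= 1 - c by rewrite subr_ge0.
  by have := mulr_ge0 k0 (mulr_ge0 dl0 c1); nra.
- by have := sqr_ge0 (delta * Num.sqrt x * t); lra.
rewrite lerD2l !exprMn sqr_sqrtr //.
have dx0 := mulr_ge0 dl0 x0.
have : 0 <= delta * x * (1 - c - t ^+ 2) by apply: mulr_ge0; rewrite ?subr_ge0.
have : 0 <= delta * x * t ^+ 2 * (2^-1 - delta).
  by apply: mulr_ge0; [exact: mulr_ge0 | rewrite subr_ge0].
nra.
Qed.

Lemma cos2pi_natB (d h : nat) : (h <= d)%N ->
  cos (2 * pi * (d - h)%:R / d%:R) = cos (2 * pi * h%:R / d%:R) :> R.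
Proof.
move=> hd; have [->|d_neq0] := eqVneq d 0%N; first by rewrite invr0 !mulr0.
rewrite natrB // -[RHS]cosN -[RHS]cosD2pi -[pi *+ 2]mulr_natr; congr cos.
by field; rewrite pnatr_eq0.
Qed.

(* The bound 2 / s is not inductive in k; this refinement of it is. *)
Lemma sum_inv1Dsqr_le s (k : nat) : 0 < s ->
  \sum_(1 <= h < k.+1) (1 + (s * h%:R) ^+ 2)^-1 <= 2 * k%:R / (1 + s * k%:R).
Proof.
move=> s0; elim: k => [|k IH]; first by rewrite big_geq // mulr0 mul0r.
rewrite big_nat_recr //=; apply: le_trans (lerD IH (lexx _)) _.
rewrite -[k.+1]addn1 natrD; move: (k%:R) (ler0n R k) => u u0.
set v := s * u; set w := s * (u + 1).
have v0 : 0 <= v by rewrite mulr_ge0 // ltW.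
have vw : v <= w by rewrite ler_wpM2l ?ltW //; lra.
have w2 := sqr_ge0 w.
rewrite -subr_ge0.
have -> : 2 * (u + 1) / (1 + w) - (2 * u / (1 + v) + (1 + w ^+ 2)^-1)
          = (2 * (1 + w ^+ 2) - (1 + v) * (1 + w)) / ((1 + v) * (1 + w) * (1 + w ^+ 2)).
  rewrite /v /w; field.
  by have := sqr_ge0 (s * (u + 1)); have := mulr_ge0 (ltW s0) u0; lra.
apply: divr_ge0; last by rewrite !mulr_ge0 //; lra.
have : 0 <= (w - v) * (1 + w) by rewrite mulr_ge0 ?subr_ge0 //; lra.
have := sqr_ge0 (1 - w).
nra.
Qed.

Lemma sum_inv1Dsqr_le2V s (d : nat) : 0 < s ->
  \sum_(1 <= h < d) (1 + (s * h%:R) ^+ 2)^-1 <= 2 / s.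
Proof.
move=> s0; case: d => [|k]; first by rewrite big_geq // divr_ge0 // ltW.
apply: le_trans (sum_inv1Dsqr_le _ k s0) _.
have sk0 : 0 <= s * k%:R by rewrite mulr_ge0 ?ler0n // ltW.
rewrite ler_pdivrMr; last by lra.
rewrite mulrDr mulr1 mulrA mulfVK ?gt_eqF //.
by rewrite lerDr divr_ge0 // ltW.
Qed.

Lemma powR_cos2pi_nat_le delta x (d h : nat) :
  0 <= delta <= 2^-1 -> 0 <= x -> (h <= d)%N ->
  (1 - delta + delta * cos (2 * pi * h%:R / d%:R)) `^ (x / 2)
    <= (1 + (delta * Num.sqrt x / d%:R * h%:R) ^+ 2)^-1
     + (1 + (delta * Num.sqrt x / d%:R * (d - h)%:R) ^+ 2)^-1.
Proof.
move=> delta_itv x0 hd; set s := delta * Num.sqrt x / d%:R.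
have inv_ge0 m : 0 <= (1 + (s * m%:R) ^+ 2)^-1 by rewrite invr_ge0 addr_ge0 ?sqr_ge0.
have half_le m : (2 * m <= d)%N ->
    (1 - delta + delta * cos (2 * pi * m%:R / d%:R)) `^ (x / 2)
      <= (1 + (s * m%:R) ^+ 2)^-1.
  move=> md; have m_itv : 0 <= (m%:R / d%:R : R) <= 2^-1.
    rewrite divr_ge0 //=; have [->|d_gt0] := posnP d; first by rewrite invr0 mulr0.
    have : (2 * m)%:R <= d%:R :> R by rewrite ler_nat.
    by rewrite natrM ler_pdivrMr ?ltr0n //; lra.
  have -> : s * m%:R = delta * Num.sqrt x * (m%:R / d%:R) by rewrite mulrAC -mulrA.
  by rewrite -mulrA powR_cos2pi_le.
have [md|dm] := leqP (2 * h) d.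
  by rewrite -[X in X <= _]addr0 lerD ?half_le.
rewrite -cos2pi_natB // -[X in X <= _]add0r lerD ?half_le //; lia.
Qed.

Lemma mean_powR_cos2pi_le delta x (d : nat) :
  0 < delta <= 2^-1 -> 0 < x -> (0 < d)%N ->
  d%:R^-1 * \sum_(1 <= h < d) (1 - delta + delta * cos (2 * pi * h%:R / d%:R)) `^ (x / 2)
    <= 4 / (delta * Num.sqrt x).
Proof.
move=> /andP[dl0 dl1] x0 d0.
have d_gt0 : 0 < d%:R :> R by rewrite ltr0n.
have sqrt_gt0 : 0 < Num.sqrt x by rewrite sqrtr_gt0.
set s := delta * Num.sqrt x / d%:R.
have s0 : 0 < s by rewrite divr_gt0 // mulr_gt0.
have sum_le : \sum_(1 <= h < d) (1 - delta + delta * cos (2 * pi * h%:R / d%:R)) `^ (x / 2)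
    <= \sum_(1 <= h < d) ((1 + (s * h%:R) ^+ 2)^-1 + (1 + (s * (d - h)%:R) ^+ 2)^-1).
  apply: ler_sum_nat => h /andP[_ hd].
  by apply: powR_cos2pi_nat_le (ltW x0) (ltnW hd); rewrite ltW.
have sum_rev : \sum_(1 <= h < d) (1 + (s * (d - h)%:R) ^+ 2)^-1
             = \sum_(1 <= h < d) (1 + (s * h%:R) ^+ 2)^-1.
  by rewrite [RHS]big_nat_rev; apply: eq_bigr => h _; rewrite add1n subSS.
rewrite big_split /= sum_rev in sum_le.
have -> : 4 / (delta * Num.sqrt x) = d%:R^-1 * (4 / s).
  by rewrite /s; field; rewrite !gt_eqF.
rewrite ler_pM2l ?invr_gt0 //.
have := sum_inv1Dsqr_le2V _ d s0; lra.
Qed.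

End Bounds.

Theorem lemma2p2 (R : realType) (delta : R)
  (hd0 : 0 < delta) (hd1 : delta <= 2^-1) :
  exists C : R, 0 < C /\
  exists N : nat, forall n d : nat, (N <= n)%N -> (1 < d)%N ->
    `| d%:R^-1 * \sum_(1 <= h < d)
         (1 - delta + delta * cos (2 * pi * h%:R / d%:R)) `^ (n%:R / 2) |
    <= C * ln (n%:R : R) / Num.sqrt (n%:R : R).
Proof.
have ln2_gt0 : 0 < ln 2 :> R by rewrite ln_gt0 // ltr1n.
exists (4 / (delta * ln 2)); split; first by rewrite divr_gt0 // mulr_gt0.
exists 2%N => n d n2 d1.
have n_gt0 : 0 < n%:R :> R by rewrite ltr0n; lia.
have sqrt_gt0 : 0 < Num.sqrt n%:R :> R by rewrite sqrtr_gt0.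
rewrite ger0_norm; last first.
  by rewrite mulr_ge0 ?invr_ge0 ?ler0n ?sumr_ge0 // => h _; apply: powR_ge0.
have delta_itv : 0 < delta <= 2^-1 by rewrite hd0.
apply: le_trans (mean_powR_cos2pi_le _ _ _ _ delta_itv n_gt0 (ltnW d1)) _.
rewrite [X in X <= _](_ : _ = 4 / (delta * ln 2) * ln 2 / Num.sqrt n%:R); last first.
  by field; rewrite !gt_eqF.
by rewrite ler_pM2r ?invr_gt0 // ler_pM2l ?divr_gt0 ?mulr_gt0 // ler_ln ?posrE ?ler_nat.
Qed.
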